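(* Let $\gamma$ be an even probability density on $\mathbb{R}$ positive near $0$ and $\mathcal{P}=\mathcal{P}^n_\gamma$ the corresponding sub-spherical family on $\mathbb{R}^n$, let $\delta\ge0$, and let $\eta$ be a $\delta$-regular potential. Then $\mathrm{risk}_\delta(\eta|\mathcal{P}^n_\gamma)\le\epsilon_\delta(\eta|\gamma)$, where $\epsilon_\delta(\eta|\gamma)=\int_{-\infty}^{\infty}e^{-\eta(\delta+s)}\gamma(s)\,ds$.
   Context: The sub-spherical family $\mathcal{P}^n_\gamma$ consists of all even probability densities $p$ on $\mathbb{R}^n$ such that $\int_{\{e^T\xi\ge t\}}p(\xi)d\xi\le\int_t^\infty\gamma(s)ds$ for all unit $e\in\mathbb{R}^n$ and $t\ge0$. A potential is an odd, nondecreasing Borel function $\eta:\mathbb{R}\to\mathbb{R}$; it is $\delta$-regular if $H_{\delta\eta}(s)=e^{-\eta(\delta-s)}+e^{-\eta(\delta+s)}$ is nondecreasing on $s\ge0$. For a family $\mathcal{P}$ of densities on $\mathbb{R}^n$, $\mathrm{risk}_\delta(\eta|\mathcal{P})$ is the smallest $\epsilon$ such that for all unit $e$ and all $p\in\mathcal{P}$: $\int e^{-\eta(\delta+e^T\xi)}p(\xi)d\xi\le\epsilon$ and $\int e^{\eta(e^T\xi-\delta)}p(\xi)d\xi\le\epsilon$. *)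

From HB Require Import structures.
From mathcomp Require Import all_boot all_order all_algebra.
From mathcomp Require Import all_classical all_reals all_analysis.
Set Implicit Arguments. Unset Strict Implicit. Unset Printing Implicit Defensive.
Import Order.TTheory GRing.Theory Num.Theory.
Local Open Scope classical_set_scope.
Local Open Scope ring_scope.

(* Points of R^n are n-tuples of reals (with the product Borel sigma-algebra
   provided by mathcomp-analysis on tuples). *)

(* Lebesgue integral on R^n of a NONNEGATIVE function, written as the
   iterated Lebesgue integral over the coordinates (equal to the integral
   against n-dimensional Lebesgue measure by Tonelli); only applied below to
   nonnegative measurable integrands. *)
Fixpoint iint (R : realType) (n : nat) : (n.-tuple R -> \bar R) -> \bar R :=
  match n return (n.-tuple R -> \bar R) -> \bar R with
  | 0 => fun f => f [tuple]
  | m.+1 => fun f =>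
      (\int[@lebesgue_measure R]_x iint (fun t : m.-tuple R => f (cons_tuple x t)))%E
  end.

Definition dotv (R : realType) (n : nat) (e x : n.-tuple R) : R :=
  \sum_(i < n) tnth e i * tnth x i.

Definition unitv (R : realType) (n : nat) (e : n.-tuple R) : Prop :=
  dotv e e = 1.

Definition even_density1 (R : realType) (g : R -> R) : Prop :=
  measurable_fun setT g /\ (forall s, 0 <= g s) /\
  (\int[@lebesgue_measure R]_s (g s)%:E = 1)%E /\ (forall s, g (- s) = g s).

Definition pos_near0 (R : realType) (g : R -> R) : Prop :=
  exists r : R, 0 < r /\ forall s, `|s| < r -> 0 < g s.

Definition even_density (R : realType) (n : nat) (p : n.-tuple R -> R) : Prop :=
  measurable_fun setT p /\ (forall x, 0 <= p x) /\
  iint (fun x => (p x)%:E) = 1%E /\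
  (forall x, p (map_tuple (fun y => - y) x) = p x).

Definition subspherical (R : realType) (n : nat) (g : R -> R)
    (p : n.-tuple R -> R) : Prop :=
  even_density p /\
  forall e : n.-tuple R, unitv e -> forall t : R, 0 <= t ->
    (iint (fun x => ((\1_[set y | t <= dotv e y] x) * p x)%:E)
     <= \int[@lebesgue_measure R]_(s in `[t, +oo[%classic) (g s)%:E)%E.

Definition potential (R : realType) (eta : R -> R) : Prop :=
  (forall s, eta (- s) = - eta s) /\
  (forall s1 s2, s1 <= s2 -> eta s1 <= eta s2) /\
  measurable_fun setT eta.

Definition Hfun (R : realType) (delta : R) (eta : R -> R) (s : R) : R :=
  expR (- eta (delta - s)) + expR (- eta (delta + s)).

Definition regular (R : realType) (delta : R) (eta : R -> R) : Prop :=
  forall s1 s2, 0 <= s1 -> s1 <= s2 -> Hfun delta eta s1 <= Hfun delta eta s2.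

(* risk_delta(eta | P): the smallest epsilon bounding both integrals for all
   unit e and p in P, i.e. the supremum of all these integrals. *)
Definition risk (R : realType) (n : nat) (delta : R) (eta : R -> R)
    (P : (n.-tuple R -> R) -> Prop) : \bar R :=
  ereal_sup [set v | exists (e : n.-tuple R) (p : n.-tuple R -> R),
    unitv e /\ P p /\
    (v = iint (fun x => (expR (- eta (delta + dotv e x)) * p x)%:E) \/
     v = iint (fun x => (expR (eta (dotv e x - delta)) * p x)%:E))].

Definition eps (R : realType) (delta : R) (eta : R -> R) (g : R -> R) : \bar R :=
  (\int[@lebesgue_measure R]_s (expR (- eta (delta + s)) * g s)%:E)%E.

From HB Require Import structures.
From mathcomp Require Import all_boot all_order all_algebra.
From mathcomp Require Import all_classical all_reals all_analysis.
From mathcomp Require Import measurable_realfun.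
Set Implicit Arguments. Unset Strict Implicit. Unset Printing Implicit Defensive.
Import Order.TTheory GRing.Theory Num.Theory.
Local Open Scope classical_set_scope.
Local Open Scope ring_scope.

(* Fix a unit vector e and p in the family, and write X = e^T xi.  As p is
   even, E exp(-eta(delta + X)) is half of E H(X) for H = H_{delta eta}, and
   eps_delta(eta|gamma) is likewise half of the gamma-integral of H.  H is even
   and, by delta-regularity, nondecreasing in |s|, so each superlevel set
   {H > u} lies between {|s| > a} and {|s| >= a}; the sub-spherical tail bound
   for e and -e then gives P(H(X) > u) <= gamma({H > u}), and integrating over
   u (layer cake) yields E H(X) <= int H gamma.  The second integral in the
   risk is the first one after xi |-> -xi, since eta is odd. *)

Section iterated_integral.
Context {R : realType}.
Local Notation mu := (@lebesgue_measure R).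
Local Open Scope ereal_scope.

Lemma iint_ge0 (n : nat) (f : n.-tuple R -> \bar R) :
  (forall x, 0 <= f x) -> 0 <= iint f.
Proof.
elim: n f => [|m IH] f f0 /=; first exact: f0.
by apply: integral_ge0 => x _; apply: IH.
Qed.

Lemma measurable_iint (n : nat) d (T : measurableType d)
    (f : T * n.-tuple R -> \bar R) :
  measurable_fun [set: T * n.-tuple R] f -> (forall z, 0 <= f z) ->
  measurable_fun [set: T] (fun x => iint (fun t => f (x, t))).
Proof.
elim: n d T f => [|m IH] d T f mf f0 /=.
  exact: (measurableT_comp (f := f) (g := fun x => (x, [tuple]))).
pose g z := f (z.1.1, cons_tuple z.1.2 z.2).
have mg : measurable_fun [set: (T * R) * m.-tuple R] g.
  apply: measurableT_comp => //; apply: measurable_fun_pair.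
    exact: measurableT_comp.
  by apply: measurable_cons => //; exact: measurableT_comp.
exact: (@measurable_fun_fubini_tonelli_F _ _ _ _ _ mu _
  (IH _ _ g mg (fun z => f0 _)) (fun z => iint_ge0 (fun t => f0 _))).
Qed.

Lemma measurable_iint_cons (m : nat) (f : m.+1.-tuple R -> \bar R) :
  measurable_fun [set: m.+1.-tuple R] f -> (forall x, 0 <= f x) ->
  measurable_fun [set: R] (fun y => iint (fun t => f (cons_tuple y t))).
Proof.
move=> mf f0; apply: (measurable_iint (f := fun z => f (cons_tuple z.1 z.2))).
  by apply: measurableT_comp => //; exact: measurable_cons.
by move=> z; apply: f0.
Qed.

Lemma measurable_cons_comp (m : nat) (f : m.+1.-tuple R -> \bar R) (y : R) :
  measurable_fun [set: m.+1.-tuple R] f ->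
  measurable_fun [set: m.-tuple R] (fun t => f (cons_tuple y t)).
Proof. by move=> mf; apply: measurableT_comp => //; exact: measurable_cons. Qed.

Lemma le_iint (n : nat) (f g : n.-tuple R -> \bar R) :
  measurable_fun [set: n.-tuple R] f -> measurable_fun [set: n.-tuple R] g ->
  (forall x, 0 <= f x) -> (forall x, f x <= g x) -> iint f <= iint g.
Proof.
elim: n f g => [|m IH] f g mf mg f0 fg /=; first exact: fg.
have g0 x : 0 <= g x by exact: le_trans (f0 x) (fg x).
apply: ge0_le_integral => //.
- by move=> x _; apply: iint_ge0 => t; apply: f0.
- exact: measurable_iint_cons.
- exact: measurable_iint_cons.
- by move=> x _; apply: IH; try exact: measurable_cons_comp.
Qed.

Lemma iintD (n : nat) (f g : n.-tuple R -> \bar R) :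
  measurable_fun [set: n.-tuple R] f -> measurable_fun [set: n.-tuple R] g ->
  (forall x, 0 <= f x) -> (forall x, 0 <= g x) ->
  iint (fun x => f x + g x) = iint f + iint g.
Proof.
elim: n f g => [|m IH] f g mf mg f0 g0 //=.
rewrite -ge0_integralD //.
- by apply: eq_integral => x _; apply: IH; try exact: measurable_cons_comp.
- by move=> x _; apply: iint_ge0.
- exact: measurable_iint_cons.
- by move=> x _; apply: iint_ge0.
- exact: measurable_iint_cons.
Qed.

Lemma iint0 (n : nat) : iint (fun _ : n.-tuple R => 0) = 0.
Proof.
elim: n => [|m IH] //=.
under eq_integral do rewrite IH.
exact: integral0.
Qed.

Lemma iint_integral_swap (n : nat) (F : n.-tuple R * R -> \bar R) :
  measurable_fun [set: n.-tuple R * R] F -> (forall z, 0 <= F z) ->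
  iint (fun x => \int[mu]_u F (x, u)) = \int[mu]_u iint (fun x => F (x, u)).
Proof.
elim: n F => [|m IH] F mF F0 //=.
transitivity (\int[mu]_y \int[mu]_u iint (fun t => F (cons_tuple y t, u))).
  apply: eq_integral => y _.
  apply: (IH (fun z => F (cons_tuple y z.1, z.2))); last by move=> z; apply: F0.
  apply: measurableT_comp => //; apply: measurable_fun_pair => //.
  exact: measurable_cons.
pose G z := iint (fun t => F (cons_tuple z.1 t, z.2)).
have mG : measurable_fun [set: R * R] G.
  apply: (measurable_iint (f := fun z => F (cons_tuple z.1.1 z.2, z.1.2))).
    apply: measurableT_comp => //; apply: measurable_fun_pair.
      by apply: measurable_cons => //; exact: measurableT_comp.
    exact: measurableT_comp.
  by move=> z; apply: F0.
exact: (@fubini_tonelli _ _ _ _ _ mu mu G mG (fun z => iint_ge0 (fun t => F0 _))).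
Qed.

Lemma ge0_integral_comp_oppr (g : R -> \bar R) :
  measurable_fun [set: R] g -> (forall x, 0 <= g x) ->
  \int[mu]_x g (- x)%R = \int[mu]_x g x.
Proof.
move=> mg g0.
have := @ge0_integral_pushforward _ _ (measurableTypeR R) (measurableTypeR R) R (-%R)
  (@oppr_measurable _ _) mu setT g measurableT mg (fun y _ => g0 y).
rewrite preimage_setT => <-.
apply: eq_measure_integral => A mA _.
exact: lebesgue_measureN.
Qed.

Definition negt (n : nat) (x : n.-tuple R) : n.-tuple R :=
  map_tuple (fun y => - y)%R x.

Lemma negt_cons (m : nat) (y : R) (t : m.-tuple R) :
  negt (cons_tuple y t) = cons_tuple (- y)%R (negt t).
Proof. exact: val_inj. Qed.

Lemma measurable_negt (n : nat) : measurable_fun [set: n.-tuple R] (@negt n).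
Proof.
apply/measurable_fun_tnthP => i.
rewrite (_ : _ \o _ = fun x => - tnth x i)%R; last first.
  by apply/funext => x; rewrite /= tnth_map.
exact: measurableT_comp (measurable_tnth i).
Qed.

Lemma iint_comp_negt (n : nat) (f : n.-tuple R -> \bar R) :
  measurable_fun [set: n.-tuple R] f -> (forall x, 0 <= f x) ->
  iint (fun x => f (negt x)) = iint f.
Proof.
elim: n f => [|m IH] f mf f0 /=; first by congr f; apply: val_inj.
transitivity (\int[mu]_y iint (fun t => f (cons_tuple (- y)%R t))).
  apply: eq_integral => y _.
  rewrite -(IH (fun t => f (cons_tuple (- y)%R t))) //; last exact: measurable_cons_comp.
  by under eq_fun do rewrite negt_cons.
apply: (ge0_integral_comp_oppr (g := fun y => iint (fun t => f (cons_tuple y t)))).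
  exact: measurable_iint_cons.
by move=> y; apply: iint_ge0.
Qed.

End iterated_integral.

Section unit_vectors.
Context {R : realType}.

Lemma measurable_dotv (n : nat) (e : n.-tuple R) :
  measurable_fun [set: n.-tuple R] (dotv e).
Proof.
apply: measurable_sum => i; apply: measurable_funM => //.
exact: measurable_tnth.
Qed.

Lemma dotv_negr (n : nat) (e x : n.-tuple R) : dotv e (negt x) = - dotv e x.
Proof. by rewrite /dotv -sumrN; apply: eq_bigr => i _; rewrite tnth_map mulrN. Qed.

Lemma dotv_negl (n : nat) (e x : n.-tuple R) : dotv (negt e) x = - dotv e x.
Proof. by rewrite /dotv -sumrN; apply: eq_bigr => i _; rewrite tnth_map mulNr. Qed.

Lemma unitv_negt (n : nat) (e : n.-tuple R) : unitv e -> unitv (negt e).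
Proof. by rewrite /unitv dotv_negl dotv_negr opprK. Qed.

End unit_vectors.

Section layer_cake.
Context {R : realType}.
Local Notation mu := (@lebesgue_measure R).

(* The indicator of [0 <= u < y], written as a product so that it is jointly
   measurable in (y, u). *)
Definition layer (y u : R) : R :=
  \1_(`[0, +oo[%classic : set R) u * \1_(`]0, +oo[%classic : set R) (y - u).

Lemma layerE (y u : R) : layer y u = ((0 <= u) && (u < y))%:R.
Proof.
rewrite /layer !indicE !mem_setE !in_itv /= !andbT subr_gt0.
by case: (0 <= u); case: (u < y); rewrite ?mulr1 ?mulr0 ?mul0r.
Qed.

Lemma layer_ge0 (y u : R) : 0 <= layer y u.
Proof. by rewrite layerE ler0n. Qed.

Lemma measurable_layer1 (y : R) : measurable_fun [set: R] (layer y).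
Proof.
apply: measurable_funM; first exact: measurable_indic.
apply: measurableT_comp; first exact: measurable_indic.
exact: measurable_funB.
Qed.

Lemma measurable_layer d (T : measurableType d) (k q : T -> R) :
  measurable_fun [set: T] k -> measurable_fun [set: T] q ->
  measurable_fun [set: T * R] (fun z => (layer (k z.1) z.2 * q z.1)%:E).
Proof.
move=> mk mq; apply/measurable_EFinP; apply: measurable_funM; last first.
  exact: measurableT_comp.
apply: measurable_funM; first exact: measurableT_comp (measurable_indic _) _.
apply: measurableT_comp; first exact: measurable_indic.
by apply: measurable_funB => //; exact: measurableT_comp.
Qed.

Lemma measurable_layer_at d (T : measurableType d) (k q : T -> R) (u : R) :
  measurable_fun [set: T] k -> measurable_fun [set: T] q ->
  measurable_fun [set: T] (fun x => (layer (k x) u * q x)%:E).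
Proof.
move=> mk mq.
exact: measurableT_comp (measurable_layer mk mq) (measurable_fun_pair _ _).
Qed.

Local Open Scope ereal_scope.

Lemma integral_layer (y c : R) : (0 <= y)%R -> (0 <= c)%R ->
  \int[mu]_u (layer y u * c)%:E = (y * c)%:E.
Proof.
move=> y0 c0; under eq_integral do rewrite EFinM.
rewrite ge0_integralZr //; last 2 first.
- by apply/measurable_EFinP; exact: measurable_layer1.
- by move=> u _; rewrite lee_fin layer_ge0.
have -> : (fun u => (layer y u)%:E) = (fun u => (\1_(`[0%R, y[%classic : set R) u)%:E).
  by apply/funext => u; rewrite layerE indicE mem_setE in_itv.
rewrite integral_indic // setIT.
transitivity (lebesgue_measure (`[0%R, y[%classic : set R) * c%:E); first by [].
rewrite lebesgue_measure_itv /= lte_fin.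
have [y_gt0|] := ltP 0%R y; first by rewrite sube0.
by move=> y_le0; have -> : y = 0%R by apply/le_anti; rewrite y_le0 y0.
Qed.

End layer_cake.

Section even_tails.
Context {R : realType}.
Local Notation mu := (@lebesgue_measure R).
Local Open Scope ereal_scope.

Lemma measurable_indic_ge d (T : measurableType d) (X : T -> R) (a : R) :
  measurable_fun [set: T] X ->
  measurable_fun [set: T] (fun x => \1_[set y | a <= X y]%R x : R).
Proof.
move=> mX; apply: measurable_indic.
rewrite (_ : [set y | _] = X @^-1` `[a, +oo[); last first.
  by apply/seteqP; split => y /=; rewrite in_itv /= andbT.
by rewrite -[_ @^-1` _]setTI; apply: mX => //; exact: measurable_itv.
Qed.

Lemma measurable_indic_gt d (T : measurableType d) (X : T -> R) (a : R) :
  measurable_fun [set: T] X ->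
  measurable_fun [set: T] (fun x => \1_[set y | a < X y]%R x : R).
Proof.
move=> mX; apply: measurable_indic.
rewrite (_ : [set y | _] = X @^-1` `]a, +oo[); last first.
  by apply/seteqP; split => y /=; rewrite in_itv /= andbT.
by rewrite -[_ @^-1` _]setTI; apply: mX => //; exact: measurable_itv.
Qed.

Lemma even_tail_integral (gamma : R -> R) (a : R) :
  measurable_fun [set: R] gamma -> (forall s, 0 <= gamma s)%R ->
  (forall s, gamma (- s) = gamma s)%R -> (0 <= a)%R ->
  \int[mu]_(s in `[a, +oo[) (gamma s)%:E + \int[mu]_(s in `[a, +oo[) (gamma s)%:E =
  \int[mu]_s (\1_[set s | a < `|s|]%R s * gamma s)%:E.
Proof.
move=> mg g0 g_even a0.
pose I s := (\1_(`]a, +oo[%classic : set R) s * gamma s)%R.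
have mI : measurable_fun [set: R] I by apply: measurable_funM.
have I0 s : 0 <= (I s)%:E by rewrite lee_fin mulr_ge0.
have tail_open : \int[mu]_(s in `[a, +oo[) (gamma s)%:E = \int[mu]_s (I s)%:E.
  rewrite -integral_itv_obnd_cbnd; last first.
    by apply/measurable_EFinP; exact: measurable_funTS.
  rewrite integral_mkcond; apply: eq_integral => s _.
  by rewrite patchE /I indicE; case: (s \in _); rewrite ?mul1r ?mul0r.
have mIN : measurable_fun [set: R] (fun s => (I (- s)%R)%:E).
  by apply/measurable_EFinP; exact: measurableT_comp mI _.
rewrite tail_open -[X in _ + X](ge0_integral_comp_oppr (g := fun s => (I s)%:E)) //; last first.
  exact/measurable_EFinP.
rewrite -ge0_integralD //; last exact/measurable_EFinP.
apply: eq_integral => s _; rewrite -EFinD /I g_even -mulrDl; congr (_ * _)%:E.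
rewrite [in RHS]indicE (_ : (s \in _) = (a < `|s|)%R); last first.
  by apply/idP/idP; rewrite inE.
rewrite !indicE !mem_setE !in_itv /= !andbT.
have [s0|s0] := leP 0%R s.
  by rewrite ger0_norm // [(a < - s)%R]ltNge (le_trans _ a0) ?oppr_le0 // addr0.
by rewrite ltr0_norm // [(a < s)%R]ltNge (le_trans (ltW s0) a0) add0r.
Qed.

End even_tails.

Section even_monotone.
Context {R : realType} (H : R -> R).
Hypothesis H_even : forall s, H (- s) = H s.
Hypothesis H_mono : forall s1 s2, 0 <= s1 -> s1 <= s2 -> H s1 <= H s2.

Lemma even_norm (s : R) : H s = H `|s|.
Proof.
have [s0|s0] := leP 0 s; first by rewrite ger0_norm.
by rewrite ltr0_norm // H_even.
Qed.

Lemma superlevel_even_monotone (u : R) : (exists s, u < H s) ->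
  exists2 a, 0 <= a &
    (forall s, u < H s -> a <= `|s|) /\ (forall s, a < `|s| -> u < H s).
Proof.
move=> [s0 hs0].
pose E := [set `|s| | s in [set s | u < H s]].
have E0 : E !=set0 by exists `|s0|, s0.
have Elb : has_lbound E by exists 0 => _ [s _ <-].
exists (inf E); first by apply: lb_le_inf => // _ [s _ <-].
split=> [s hs|s]; first by apply: (ge_inf Elb); exists s.
move=> /(inf_lt E0) [_ [t ht <-] ts].
rewrite even_norm (lt_le_trans ht) // [H t]even_norm.
by apply: H_mono => //; exact: ltW.
Qed.

End even_monotone.

Section subspherical_bounds.
Context {R : realType} {n : nat} (gamma : R -> R) (p : n.-tuple R -> R).
Context (e : n.-tuple R).
Local Notation mu := (@lebesgue_measure R).
Hypothesis gamma_meas : measurable_fun [set: R] gamma.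
Hypothesis gamma_ge0 : forall s, 0 <= gamma s.
Hypothesis gamma_even : forall s, gamma (- s) = gamma s.
Hypothesis p_sub : subspherical gamma p.
Hypothesis e_unit : unitv e.
Local Open Scope ereal_scope.

Lemma subspherical_abs_tail (a : R) : (0 <= a)%R ->
  iint (fun x => (\1_[set y | a <= `|dotv e y|]%R x * p x)%:E) <=
  \int[mu]_(s in `[a, +oo[) (gamma s)%:E + \int[mu]_(s in `[a, +oo[) (gamma s)%:E.
Proof.
move=> a0; have [[mp [p0 _]] tail] := p_sub.
pose T (e' : n.-tuple R) x := (\1_[set y | a <= dotv e' y]%R x * p x)%R.
have mT e' : measurable_fun [set: n.-tuple R] (fun x => (T e' x)%:E).
  apply/measurable_EFinP; apply: measurable_funM => //.
  exact: measurable_indic_ge (measurable_dotv e').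
have T0 e' x : 0 <= (T e' x)%:E by rewrite lee_fin mulr_ge0 // indicE ler0n.
apply: (@le_trans _ _ (iint (fun x => (T e x)%:E + (T (negt e) x)%:E))).
  apply: le_iint => //.
  - apply/measurable_EFinP; apply: measurable_funM => //.
    apply: measurable_indic_ge.
    exact: measurableT_comp (measurable_dotv e).
  - exact: emeasurable_funD.
  - by move=> x; rewrite lee_fin mulr_ge0 // indicE ler0n.
  move=> x; rewrite -EFinD lee_fin /T -mulrDl ler_wpM2r //.
  rewrite [X in (X <= _)%R]indicE; case: (boolP (x \in _)); last first.
    by move=> _; rewrite addr_ge0 // indicE ler0n.
  move=> /set_mem /=; have [X0|X0] := leP 0%R (dotv e x).
    rewrite ger0_norm // => aX.
    by rewrite [X in (_ <= X + _)%R]indicE mem_set // lerDl indicE ler0n.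
  rewrite ltr0_norm // => aX.
  rewrite [X in (_ <= _ + X)%R]indicE mem_set ?lerDr ?indicE ?ler0n //=.
  by rewrite dotv_negl.
rewrite iintD //.
exact: leeD (tail _ e_unit _ a0) (tail _ (unitv_negt e_unit) _ a0).
Qed.

Variable H : R -> R.
Hypothesis H_meas : measurable_fun [set: R] H.
Hypothesis H_even : forall s, H (- s) = H s.
Hypothesis H_mono : forall s1 s2, (0 <= s1 -> s1 <= s2 -> H s1 <= H s2)%R.

Lemma subspherical_layer_le (u : R) :
  iint (fun x => (layer (H (dotv e x)) u * p x)%:E) <=
  \int[mu]_s (layer (H s) u * gamma s)%:E.
Proof.
have [[mp [p0 _]] _] := p_sub.
have mX := measurable_dotv e.
case: (pselect (exists s, (0 <= u < H s)%R)) => [[s /andP[u0 us]]|no_level].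
  have [a a0 [Ha aH]] := superlevel_even_monotone H_even H_mono (ex_intro _ s us).
  apply: (@le_trans _ _ (iint (fun x => (\1_[set y | a <= `|dotv e y|]%R x * p x)%:E))).
    apply: le_iint.
    - by apply: measurable_layer_at => //; exact: measurableT_comp.
    - apply/measurable_EFinP; apply: measurable_funM => //.
      by apply: measurable_indic_ge; exact: measurableT_comp.
    - by move=> x; rewrite lee_fin mulr_ge0 // layer_ge0.
    move=> x; rewrite lee_fin ler_wpM2r // layerE u0 /=.
    case: ltP => [/Ha aX|_]; last by rewrite indicE ler0n.
    by rewrite indicE mem_set.
  apply: le_trans (subspherical_abs_tail a0) _.
  rewrite even_tail_integral //.
  apply: ge0_le_integral => //.
  - by move=> t _; rewrite lee_fin mulr_ge0 // indicE ler0n.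
  - apply/measurable_EFinP; apply: measurable_funM => //.
    exact: measurable_indic_gt.
  - exact: measurable_layer_at.
  move=> t _; rewrite lee_fin ler_wpM2r // layerE u0 indicE.
  case: (boolP (t \in _)) => [/set_mem /aH -> //|_].
  by rewrite ler0n.
rewrite (_ : (fun x => (layer (H (dotv e x)) u * p x)%:E) = fun _ => 0) ?iint0.
  by apply: integral_ge0 => s _; rewrite lee_fin mulr_ge0 // layer_ge0.
apply/funext => x; rewrite layerE.
case: (boolP (_ && _)) => [h|_]; last by rewrite mul0r.
by case: no_level; exists (dotv e x).
Qed.

Hypothesis H_ge0 : forall s, (0 <= H s)%R.

Lemma subspherical_even_monotone_le :
  iint (fun x => (H (dotv e x) * p x)%:E) <= \int[mu]_s (H s * gamma s)%:E.
Proof.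
have [[mp [p0 _]] _] := p_sub.
have mHX : measurable_fun [set: n.-tuple R] (H \o dotv e).
  exact: measurableT_comp (measurable_dotv e).
under eq_fun do rewrite -integral_layer //.
rewrite (iint_integral_swap (F := fun z => (layer (H (dotv e z.1)) z.2 * p z.1)%:E)); last 2 first.
- exact: measurable_layer mHX mp.
- by move=> z; rewrite lee_fin mulr_ge0 // layer_ge0.
under [X in _ <= X]eq_integral do rewrite -integral_layer //.
rewrite (fubini_tonelli (m1 := mu) (m2 := mu)
  (fun z : R * R => (layer (H z.1) z.2 * gamma z.1)%:E)); last 2 first.
- exact: measurable_layer.
- by move=> z; rewrite lee_fin mulr_ge0 // layer_ge0.
apply: ge0_le_integral => //.
- by move=> u _; apply: iint_ge0 => x; rewrite lee_fin mulr_ge0 // layer_ge0.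
- apply: (measurable_iint (f := fun z : R * n.-tuple R =>
      (layer (H (dotv e z.2)) z.1 * p z.2)%:E)).
    exact: measurableT_comp (measurable_layer mHX mp) (measurable_fun_pair _ _).
  by move=> z; rewrite lee_fin mulr_ge0 // layer_ge0.
- apply: (@measurable_fun_fubini_tonelli_G _ _ _ _ _ mu _ (measurable_layer H_meas gamma_meas)).
  by move=> z; rewrite lee_fin mulr_ge0 // layer_ge0.
by move=> u _; exact: subspherical_layer_le.
Qed.

End subspherical_bounds.

Section potential_risk.
Context {R : realType}.
Local Notation mu := (@lebesgue_measure R).
Local Open Scope ereal_scope.

Lemma lee_addxx (x y : \bar R) : x + x <= y + y -> x <= y.
Proof.
case: x => [r| |]; case: y => [t| |] //=; rewrite ?leey ?leNye //.
rewrite -!EFinD !lee_fin => h.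
by rewrite -(ler_pM2l (_ : (0 < 2)%R)) // !mulr2n !mulrDl !mul1r.
Qed.

Lemma integral_double_oppr (g : R -> \bar R) :
  measurable_fun [set: R] g -> (forall s, 0 <= g s) ->
  \int[mu]_s g s + \int[mu]_s g s = \int[mu]_s (g (- s)%R + g s).
Proof.
move=> mg g0; rewrite -{1}ge0_integral_comp_oppr // ge0_integralD //.
exact: measurableT_comp mg _.
Qed.

Lemma iint_double_negt (n : nat) (F : n.-tuple R -> \bar R) :
  measurable_fun [set: n.-tuple R] F -> (forall x, 0 <= F x) ->
  iint F + iint F = iint (fun x => F (negt x) + F x).
Proof.
move=> mF F0.
have mFN : measurable_fun [set: n.-tuple R] (fun x : n.-tuple R => F (negt x)).
  exact: measurableT_comp mF (@measurable_negt R n).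
by rewrite -{1}iint_comp_negt // iintD.
Qed.

Lemma measurable_expRN_shift (eta : R -> R) (delta : R) :
  measurable_fun [set: R] eta ->
  measurable_fun [set: R] (fun s => expR (- eta (delta + s)))%R.
Proof.
move=> meta; apply: measurableT_comp => //; apply: measurableT_comp => //.
exact: measurableT_comp meta (measurable_funD _ _).
Qed.

Lemma subspherical_exp_potential_le (n : nat) (gamma : R -> R) (delta : R)
    (eta : R -> R) (e : n.-tuple R) (p : n.-tuple R -> R) :
  even_density1 gamma -> potential eta -> regular delta eta -> unitv e ->
  subspherical gamma p ->
  iint (fun x => (expR (- eta (delta + dotv e x)) * p x)%:E) <= eps delta eta gamma.
Proof.
move=> [mg [g0 [_ g_even]]] [_ [_ meta]] eta_reg e_unit p_sub.
have [[mp [p0 [_ p_even]]] _] := p_sub.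
pose f s := expR (- eta (delta + s))%R.
have mf : measurable_fun [set: R] f by exact: measurable_expRN_shift.
have Hf s : Hfun delta eta s = (f (- s) + f s)%R by [].
have mH : measurable_fun [set: R] (Hfun delta eta).
  by apply: measurable_funD => //; exact: measurableT_comp mf _.
have H_even s : Hfun delta eta (- s)%R = Hfun delta eta s.
  by rewrite !Hf opprK addrC.
have H_ge0 s : (0 <= Hfun delta eta s)%R by rewrite Hf addr_ge0 ?expR_ge0.
apply: lee_addxx; rewrite iint_double_negt; last 2 first.
- apply/measurable_EFinP; apply: measurable_funM => //.
  exact: measurableT_comp mf (measurable_dotv e).
- by move=> x; rewrite lee_fin mulr_ge0 ?expR_ge0.
rewrite /eps integral_double_oppr; last 2 first.
- by apply/measurable_EFinP; exact: measurable_funM.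
- by move=> s; rewrite lee_fin mulr_ge0 ?expR_ge0.
have p_negt x : p (negt x) = p x by exact: p_even.
under eq_fun do rewrite dotv_negr p_negt -EFinD -mulrDl -Hf.
under eq_integral do rewrite g_even -EFinD -mulrDl -Hf.
exact: subspherical_even_monotone_le.
Qed.

Lemma iint_exp_potential_negt (n : nat) (delta : R) (eta : R -> R)
    (e : n.-tuple R) (p : n.-tuple R -> R) :
  potential eta -> even_density p ->
  iint (fun x => (expR (eta (dotv e x - delta)) * p x)%:E) =
  iint (fun x => (expR (- eta (delta + dotv e x)) * p x)%:E).
Proof.
move=> [eta_odd [_ meta]] [mp [p0 [_ p_even]]].
rewrite -[in RHS]iint_comp_negt; last 2 first.
- apply/measurable_EFinP; apply: measurable_funM => //.
  exact: measurableT_comp (measurable_expRN_shift _ meta) (measurable_dotv e).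
- by move=> x; rewrite lee_fin mulr_ge0 ?expR_ge0.
apply: congr1; apply/funext => x.
by rewrite dotv_negr [p (negt x)]p_even -eta_odd opprD opprK addrC.
Qed.

End potential_risk.

Unset Implicit Arguments. Set Strict Implicit.

Theorem proposition2p13 (R : realType) (n : nat) (gamma : R -> R)
    (delta : R) (eta : R -> R) :
  even_density1 gamma -> pos_near0 gamma ->
  0 <= delta -> potential eta -> regular delta eta ->
  (risk delta eta (@subspherical R n gamma) <= eps delta eta gamma)%E.
Proof.
move=> gamma_density _ _ eta_pot eta_reg.
apply: ge_ereal_sup => _ [e [p [e_unit [p_sub [->|->]]]]].
  exact: subspherical_exp_potential_le.
rewrite iint_exp_potential_negt //; last by case: p_sub.
exact: subspherical_exp_potential_le.
Qed.
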